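(* In the SquaredEquality formula $EQ^2(n)$, every universal literal occurrence ($u_i$, $\overline{u_i}$, $v_j$, $\overline{v_j}$) in every clause is a QRAT-literal, and hence can be removed from its clause by the QRATU rule.
   Context: A QBF $Q.\phi$ has quantifier prefix $Q$ and CNF matrix $\phi$; $k\le_Q \ell$ means the variable of $k$ is quantified at or to the left of the block of $\ell$. The SquaredEquality formula is $EQ^2(n) := Q(n).eq^2(n)$ with prefix $Q(n) := \exists\{x_1,y_1,\dots,x_n,y_n\}\,\forall\{u_1,v_1,\dots,u_n,v_n\}\,\exists\{t_{i,j} : i,j\in[n]\}$ and matrix consisting of the clauses $\{x_i,y_j,u_i,v_j,t_{i,j}\}$, $\{x_i,\overline{y_j},u_i,\overline{v_j},t_{i,j}\}$, $\{\overline{x_i},y_j,\overline{u_i},v_j,t_{i,j}\}$, $\{\overline{x_i},\overline{y_j},\overline{u_i},\overline{v_j},t_{i,j}\}$ for $i,j\in[n]$, and the clause $(\overline{t_{i,j}} : i,j\in[n])$. Unit propagation on a CNF $F$ repeatedly sets unit-clause literals true (removing satisfied clauses and deleting false literals) until no unit clause remains or the empty clause appears. A clause $C$ is an asymmetric tautology (AT) w.r.t. $\phi$ if unit propagation on $\phi\wedge\overline{C}$ derives the empty clause (in particular every tautological clause is an AT). The outer resolvent of $C\vee\ell$ and $D\vee\overline{\ell}$ is $OR(Q,C,D,\ell) := C\cup\{k\in D : k\le_Q \ell\}$. A literal $\ell$ is a QRAT-literal in the clause $C\vee\ell$ w.r.t. $Q.\phi$ if for every clause $D\vee\overline{\ell}\in\phi$,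 $OR(Q,C,D,\ell)$ is an AT w.r.t. $\phi$. The QRATU rule of the QRAT proof system allows deleting a universal QRAT-literal from its clause. *)

From HB Require Import structures.
From mathcomp Require Import all_boot.
Set Implicit Arguments. Unset Strict Implicit. Unset Printing Implicit Defensive.

Inductive var :=
| X of nat | Y of nat | U of nat | V of nat | T of nat & nat.

Definition var_eqb (a b : var) : bool :=
  match a, b with
  | X i, X j | Y i, Y j | U i, U j | V i, V j => i == j
  | T i j, T k l => (i == k) && (j == l)
  | _, _ => false
  end.

Lemma var_eqP : Equality.axiom var_eqb.
Proof.
case=> [i|i|i|i|i j] [k|k|k|k|k l] /=; try (by constructor);
  try (by apply: (iffP eqP) => [->|[]]).
by apply: (iffP andP) => [[/eqP-> /eqP->]|[-> ->]].
Qed.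

HB.instance Definition _ := hasDecEq.Build var var_eqP.

(* A literal is a variable with a polarity (true = positive). *)
Definition lit := (var * bool)%type.
Definition neg (l : lit) : lit := (l.1, ~~ l.2).
Definition clause := seq lit.   (* read as a set of literals *)
Definition cnf := seq clause.

Inductive quant := Ex | All.
Definition quant_eqb (a b : quant) :=
  match a, b with Ex, Ex | All, All => true | _, _ => false end.
Lemma quant_eqP : Equality.axiom quant_eqb.
Proof. by case; case; constructor. Qed.
HB.instance Definition _ := hasDecEq.Build quant quant_eqP.

Definition prefix := seq (quant * seq var).

(* index of the block quantifying v (size Q if v is not quantified) *)
Definition block_idx (Q : prefix) (v : var) : nat :=
  find (fun b : quant * seq var => v \in b.2) Q.

Definition leQ (Q : prefix) (k l : lit) : bool :=
  block_idx Q k.1 <= block_idx Q l.1.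

Definition is_universal (Q : prefix) (l : lit) : bool :=
  has (fun b : quant * seq var => (b.1 == All) && (l.1 \in b.2)) Q.

Definition assign (F : cnf) (l : lit) : cnf :=
  [seq [seq k <- C | k != neg l] | C <- F & l \notin C].

Inductive up_refutes : cnf -> Prop :=
| up_empty F : [::] \in F -> up_refutes F
| up_unit F l : [:: l] \in F -> up_refutes (assign F l) -> up_refutes F.

Definition neg_clause (C : clause) : cnf := [seq [:: neg k] | k <- C].

Definition AT (phi : cnf) (C : clause) : Prop := up_refutes (phi ++ neg_clause C).

Definition outer_resolvent (Q : prefix) (C D : clause) (l : lit) : clause :=
  C ++ [seq k <- D | leQ Q k l].

(* l is a QRAT-literal in the clause C \/ l w.r.t. Q.phi : for every clause
   D \/ ~l of phi (D = the clause with ~l removed), OR(Q,C,D,l) is an AT. *)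
Definition QRAT_lit (Q : prefix) (phi : cnf) (C : clause) (l : lit) : Prop :=
  forall E, E \in phi -> neg l \in E ->
    AT phi (outer_resolvent Q C [seq k <- E | k != neg l] l).

(* The SquaredEquality formula EQ^2(n), indices i, j ranging over 0..n-1 *)
Definition idx (n : nat) := iota 0 n.

Definition Qn (n : nat) : prefix :=
  [:: (Ex, flatten [seq [:: X i; Y i] | i <- idx n]);
      (All, flatten [seq [:: U i; V i] | i <- idx n]);
      (Ex, [seq T i j | i <- idx n, j <- idx n])].

Definition eq2_clauses (i j : nat) : seq clause :=
  [:: [:: (X i, true);  (Y j, true);  (U i, true);  (V j, true);  (T i j, true)];
      [:: (X i, true);  (Y j, false); (U i, true);  (V j, false); (T i j, true)];
      [:: (X i, false); (Y j, true);  (U i, false); (V j, true);  (T i j, true)];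
      [:: (X i, false); (Y j, false); (U i, false); (V j, false); (T i j, true)]].

Definition eq2 (n : nat) : cnf :=
  flatten [seq eq2_clauses i j | i <- idx n, j <- idx n]
  ++ [:: [seq (T i j, false) | i <- idx n, j <- idx n]].

(** Every universal literal [l] of EQ^2(n) is Q-blocked: a clause containing
    [(U a, b)] (resp. [(V a, b)]) also contains [(X a, b)] (resp. [(Y a, b)]),
    with the same polarity, and [X a], [Y a] sit in the outermost block.  So
    every outer resolvent on [l] contains a complementary pair of literals and
    is a tautology, hence an asymmetric tautology. *)

From mathcomp Require Import all_boot.

Set Implicit Arguments.
Unset Strict Implicit.

Lemma negK : involutive neg.
Proof. by case=> v b; rewrite /neg /= negbK. Qed.

Lemma neg_lit_neq (k : lit) : neg k != k.
Proof. by case: k => v b; rewrite /neg xpair_eqE eqxx; case: b. Qed.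

Lemma tautology_AT phi (C : clause) k : k \in C -> neg k \in C -> AT phi C.
Proof.
move=> Ck Cnk; apply: (@up_unit _ k).
  by rewrite mem_cat -{2}[k]negK map_f ?orbT.
apply: up_empty; apply/mapP; exists [:: neg k]; last by rewrite /= eqxx.
by rewrite mem_filter inE eq_sym neg_lit_neq mem_cat map_f ?orbT.
Qed.

Lemma mem_outer_resolvent Q (C D : clause) l k :
  (k \in outer_resolvent Q C D l) = (k \in C) || (k \in D) && leQ Q k l.
Proof. by rewrite mem_cat mem_filter andbC. Qed.

Definition Qblocked Q (phi : cnf) (C : clause) (l : lit) : Prop :=
  forall E, E \in phi -> neg l \in E ->
    exists2 k, k \in C & [&& k != l, neg k \in E & leQ Q (neg k) l].

Lemma Qblocked_QRAT_lit Q phi C l : Qblocked Q phi C l -> QRAT_lit Q phi C l.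
Proof.
move=> blocked E phiE El; have [k Ck /and3P [kl Enk nk_le]] := blocked E phiE El.
apply: (@tautology_AT _ _ k); first by rewrite mem_outer_resolvent Ck.
by rewrite mem_outer_resolvent !mem_filter Enk nk_le (inj_eq (can_inj negK)) kl orbT.
Qed.

Definition partner (v : var) : var :=
  match v with U i => X i | V j => Y j | w => w end.

Lemma is_universal_Qn n l :
  is_universal (Qn n) l = (l.1 \in flatten [seq [:: U i; V i] | i <- idx n]).
Proof. by rewrite /is_universal /= orbF. Qed.

Lemma partner_outer_block n v :
  v \in flatten [seq [:: U i; V i] | i <- idx n] ->
  partner v \in flatten [seq [:: X i; Y i] | i <- idx n].
Proof.
case/flattenP=> _ /mapP [i ni ->] /[!inE] /orP [] /eqP -> /=;
  by apply/flattenP; exists [:: X i; Y i]; rewrite ?map_f ?inE ?eqxx ?orbT.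
Qed.

Lemma partner_universal_neq n v :
  v \in flatten [seq [:: U i; V i] | i <- idx n] -> partner v != v.
Proof. by case/flattenP=> _ /mapP [i _ ->] /[!inE] /orP [] /eqP ->. Qed.

Lemma leQ_outer_block n k l :
  k.1 \in flatten [seq [:: X i; Y i] | i <- idx n] -> leQ (Qn n) k l.
Proof. by rewrite /leQ /block_idx /= => ->. Qed.

Lemma eq2_partner n E v b : E \in eq2 n -> (v, b) \in E -> (partner v, b) \in E.
Proof.
rewrite mem_cat => /orP [/flattenP [_ /allpairsP [[i j] [_ _ ->]]] | /[!inE] /eqP ->].
  rewrite !inE => /or4P [] /eqP -> /[!inE] /or4P [| | | /orP []] /eqP [-> <-];
  by rewrite ?inE eqxx ?orbT.
by move=> vb; case/allpairsP: (vb) => [[i j] [_ _ [vT _]]]; rewrite vT in vb *.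
Qed.

Theorem lemma9 (n : nat) :
  forall E, E \in eq2 n ->
  forall l, l \in E -> is_universal (Qn n) l ->
    QRAT_lit (Qn n) (eq2 n) [seq k <- E | k != l] l.
Proof.
move=> E eqE [v b] Evb; rewrite is_universal_Qn /= => v_univ.
have partner_neq : (partner v, b) != (v, b).
  by rewrite xpair_eqE eqxx andbT (partner_universal_neq v_univ).
apply: Qblocked_QRAT_lit => D eqD Dnvb; exists (partner v, b).
  by rewrite mem_filter partner_neq (eq2_partner eqE Evb).
rewrite partner_neq (eq2_partner eqD Dnvb).
exact/leQ_outer_block/partner_outer_block.
Qed.
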